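(* In the setting described in the context, let $i\in\mathcal V$ and let $z_{-i}=(z_j)_{j\ne i}\in[0,1]^{n-1}$ be such that $\mathcal S(z_{-i})=\{j\ne i: z_j=1\}\ne\emptyset$. Then: (i) the map $z_i\mapsto\upsilon_i(z_i,z_{-i})$ is constant on $[0,1)$; (ii) $\mathcal B_i(z_{-i})\in\{[0,1),\,[0,1],\,\{1\}\}$; (iii) if $\sigma_i^2\ge\sigma_j^2$ for every $j\in\mathcal S(z_{-i})$, then $\mathcal B_i(z_{-i})\in\{[0,1),[0,1]\}$; (iv) if $\sigma_i^2>\sigma_j^2$ for every $j\in\mathcal S(z_{-i})$, then $\mathcal B_i(z_{-i})=[0,1)$.
   Context: Let $n\ge2$ and $\mathcal V=\{1,\dots,n\}$. Let $P\in\mathbb{R}^{n\times n}$ be a row-stochastic, irreducible, aperiodic matrix (the graph on $\mathcal V$ with edge $(i,j)$ iff $P_{ij}>0$ is strongly connected with gcd of cycle lengths $1$). For $z\in[0,1]^n$, $W(z)=(I-[z])P+[z]$ ($[z]$ the diagonal matrix with diagonal $z$) and $H(z)=\lim_{t\to\infty}W(z)^t$ (the limit exists and is row-stochastic). Let $\sigma_1^2,\dots,\sigma_n^2>0$. Agent $i$'s cost is $\upsilon_i(z)=\sum_jH_{ij}(z)^2\sigma_j^2$, written $\upsilon_i(z_i,z_{-i})$, and her best response set is $\mathcal B_i(z_{-i})=\arg\min_{z_i\in[0,1]}\upsilon_i(z_i,z_{-i})$. *)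

From HB Require Import structures.
From mathcomp Require Import all_boot all_order all_algebra.
From mathcomp Require Import all_classical all_reals all_analysis.
Set Implicit Arguments. Unset Strict Implicit. Unset Printing Implicit Defensive.
Import Order.TTheory GRing.Theory Num.Theory numFieldNormedType.Exports.
Local Open Scope ring_scope.
Local Open Scope classical_set_scope.

Section Defs.
Variables (R : realType) (n : nat).

Definition mxpow (A : 'M[R]_n) (t : nat) : 'M[R]_n := iter t (fun B => B *m A) 1%:M.

Definition row_stochastic (P : 'M[R]_n) : Prop :=
  (forall i j, 0 <= P i j) /\ (forall i, \sum_(j < n) P i j = 1).

Definition edge (P : 'M[R]_n) : rel 'I_n := fun i j => 0 < P i j.

Definition irreducible_mx (P : 'M[R]_n) : Prop :=
  forall i j, connect (edge P) i j.

Definition cycle_length (P : 'M[R]_n) (k : nat) : Prop :=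
  exists (i : 'I_n) (s : seq 'I_n),
    [/\ size s = k, (0 < k)%N, path (edge P) i s & last i s = i].

Definition aperiodic_mx (P : 'M[R]_n) : Prop :=
  forall d : nat, (forall k, cycle_length P k -> (d %| k)%N) -> d = 1%N.

Definition Wmx (P : 'M[R]_n) (z : 'rV[R]_n) : 'M[R]_n :=
  (1%:M - diag_mx z) *m P + diag_mx z.

Definition Hmx (P : 'M[R]_n) (z : 'rV[R]_n) : 'M[R]_n :=
  \matrix_(i, j) limn (fun t => mxpow (Wmx P z) t i j).

Definition cost (P : 'M[R]_n) (sigma2 : 'I_n -> R) (i : 'I_n) (z : 'rV[R]_n) : R :=
  \sum_(j < n) (Hmx P z i j) ^+ 2 * sigma2 j.

Definition upd (z : 'rV[R]_n) (i : 'I_n) (x : R) : 'rV[R]_n :=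
  \row_j (if j == i then x else z 0 j).

(* best response set B_i(z_{-i}) = argmin_{x in [0,1]} v_i(x, z_{-i});
   it only depends on z through z_{-i} *)
Definition best_response (P : 'M[R]_n) (sigma2 : 'I_n -> R) (i : 'I_n)
  (z : 'rV[R]_n) : set R :=
  [set x | 0 <= x <= 1 /\
     forall y, 0 <= y <= 1 -> cost P sigma2 i (upd z i x) <= cost P sigma2 i (upd z i y)].

End Defs.

From HB Require Import structures.
From mathcomp Require Import all_boot all_order all_algebra.
From mathcomp Require Import all_classical all_reals all_analysis.
Import Order.TTheory GRing.Theory Num.Theory numFieldNormedType.Exports.
Local Open Scope ring_scope.
Local Open Scope classical_set_scope.

(* W(z) is the transition matrix of a Markov chain in which the agents j with
   z_j = 1 (the stubborn ones) are absorbing, and irreducibility of P lets every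
   agent reach one of them.  Hence W(z)^t converges; its limit H(z) is
   row-stochastic, vanishes on non-stubborn columns, and each of its columns is
   the unique W(z)-harmonic function with prescribed values on the stubborn set
   (maximum principle).  Off the stubborn set, W(z)-harmonic means P-harmonic, so
   H(z) depends on z only through its stubborn set: the cost of agent i is a
   constant c for z_i in [0, 1), and sigma_i^2 for z_i = 1, where i is absorbed.
   As row i of H is a probability vector on S, c = sum_l H_il^2 sigma_l^2 is at
   most sum_l H_il sigma_l^2, an average of sigma^2 over S; the best response
   set is read off from the comparison of c with sigma_i^2. *)

Definition harmonic {R : realType} {n : nat} (W : 'M[R]_n) (g : 'I_n -> R) :=
  forall k, g k = \sum_j W k j * g j.

Definition reaches {R : realType} {n : nat} (W : 'M[R]_n) (A : pred 'I_n) :=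
  forall k, exists2 s, connect (edge W) k s & A s.

Definition absorbing {R : realType} {n : nat} (W : 'M[R]_n) (A : pred 'I_n) :=
  forall s l, A s -> W s l = (s == l)%:R.

Definition mxlim {R : realType} {n : nat} (W : 'M[R]_n) : 'M[R]_n :=
  \matrix_(k, l) limn (fun t => mxpow W t k l).

Section Harmonic.
Context {R : realType} {n : nat}.
Implicit Types (W : 'M[R]_n) (f g : 'I_n -> R).

Lemma sum_kronecker g k : \sum_j (k == j)%:R * g j = g k.
Proof.
rewrite (bigD1 k) //= eqxx mul1r big1 ?addr0 // => j /negPf.
by rewrite eq_sym => ->; rewrite mul0r.
Qed.

Lemma mxpowSl W t : mxpow W t.+1 = W *m mxpow W t.
Proof.
elim: t => [|t IH]; first by rewrite /= mul1mx mulmx1.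
by rewrite -[LHS]/(mxpow W t.+1 *m W) [in LHS]IH -mulmxA.
Qed.

Lemma row_stochastic_mxpow W t : row_stochastic W -> row_stochastic (mxpow W t).
Proof.
move=> [W_ge0 W_sum1]; elim: t => [|t [IH_ge0 IH_sum1]].
  split=> [k l|k]; first by rewrite mxE ler0n.
  by under eq_bigr do rewrite mxE -[_%:R]mulr1; rewrite sum_kronecker.
split=> [k l|k]; first by rewrite mxE sumr_ge0 // => j _; rewrite mulr_ge0.
under eq_bigr do rewrite [mxpow _ _]/= mxE.
rewrite exchange_big /= -(IH_sum1 k); apply: eq_bigr => j _.
by rewrite -mulr_sumr W_sum1 mulr1.
Qed.

Lemma row_stochastic_le1 W k l : row_stochastic W -> W k l <= 1.
Proof.
by move=> [W_ge0 W_sum1]; rewrite -(W_sum1 k) (bigD1 l) //= lerDl sumr_ge0.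
Qed.

Lemma harmonicB W f g : harmonic W f -> harmonic W g ->
  harmonic W (fun k => f k - g k).
Proof.
move=> hf hg k; rewrite hf hg -sumrB.
by apply: eq_bigr => j _; rewrite mulrBr.
Qed.

Lemma harmonic_cvg W (f : nat -> 'I_n -> R) g :
  (forall t k, f t.+1 k = \sum_j W k j * f t j) ->
  (forall k, f t k @[t --> \oo] --> g k) -> harmonic W g.
Proof.
move=> f_rec f_cvg k.
have f_cvgS := f_cvg k; rewrite -cvg_shiftS /= in f_cvgS.
have f_recS : (fun t => f t.+1 k) @ \oo --> \sum_j W k j * g j.
  under eq_fun do rewrite f_rec.
  by apply: (cvg_big add_continuous) => j _; apply: cvgM; [exact: cvg_cst|].
exact: cvg_unique f_cvgS f_recS.
Qed.

(* A stochastic average equals its maximum only if every term of positive weight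
   does, so the maximum of g propagates along edges to a state where g <= 0. *)
Lemma harmonic_le0 W g : row_stochastic W -> harmonic W g ->
  reaches W (fun s => g s <= 0) -> forall k, g k <= 0.
Proof.
move=> [W_ge0 W_sum1] g_harm g_reach k.
have [m _ m_max] := @arg_maxP _ _ _ k xpredT g isT.
have max_edge a b : g a = g m -> edge W a b -> g b = g m.
  move=> ga ab; have gap_ge0 l : true -> 0 <= W a l * (g m - g l).
    by move=> _; rewrite mulr_ge0 // subr_ge0; apply: m_max.
  have gap_sum0 : \sum_l W a l * (g m - g l) = 0.
    under eq_bigr do rewrite mulrBr.
    by rewrite sumrB -mulr_suml W_sum1 mul1r -g_harm ga subrr.
  move: (psumr_eq0P gap_ge0 gap_sum0 (i:=b) isT) => /eqP.
  by rewrite mulf_eq0 (gt_eqF ab) subr_eq0 => /eqP.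
have max_path p a : g a = g m -> path (edge W) a p -> g (last a p) = g m.
  elim: p a => [|b p IH] a ga //= /andP[ab pb].
  exact: IH (max_edge a b ga ab) pb.
have [s /connectP [p p_path ->] gs] := g_reach m.
by rewrite (le_trans (m_max k isT)) // -(max_path p m erefl p_path).
Qed.

Lemma harmonic_eq0 W g (A : pred 'I_n) : row_stochastic W -> harmonic W g ->
  reaches W A -> (forall s, A s -> g s = 0) -> forall k, g k = 0.
Proof.
move=> W_stoch g_harm A_reach gA k.
have le0 f : harmonic W f -> (forall s, A s -> f s = 0) -> f k <= 0.
  move=> f_harm fA; apply: harmonic_le0 W_stoch f_harm _ k => k'.
  by have [s ks As] := A_reach k'; exists s; rewrite ?fA.
apply/eqP; rewrite eq_le le0 //= -oppr_le0 -sub0r.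
apply: (le0 (fun k => 0 - g k)) => [|s As]; last by rewrite gA ?subrr.
by apply: harmonicB g_harm => k'; rewrite big1 // => j _; rewrite mulr0.
Qed.

End Harmonic.

Section AbsorbingChain.
Context {R : realType} {n : nat} {W : 'M[R]_n} {A : pred 'I_n}.
Hypotheses (W_stoch : row_stochastic W) (W_absorbing : absorbing W A).
Hypothesis W_reaches : reaches W A.

Lemma mxpow_absorbing t s l : A s -> mxpow W t s l = (s == l)%:R.
Proof.
move=> As; elim: t l => [|t IH] l; first by rewrite mxE.
rewrite [mxpow _ _]/= mxE; under eq_bigr do rewrite IH.
by rewrite sum_kronecker W_absorbing.
Qed.

Let mxpow_ge0 t k l : 0 <= mxpow W t k l.
Proof. by have [] := row_stochastic_mxpow W t W_stoch. Qed.

Lemma cvgn_mxpow_absorbing k l : A l -> cvgn (fun t => mxpow W t k l).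
Proof.
move=> Al; apply: nondecreasing_is_cvgn.
  apply/nondecreasing_seqP => t; rewrite [mxpow _ t.+1]/= mxE (bigD1 l) //=.
  rewrite W_absorbing // eqxx mulr1 lerDl sumr_ge0 // => j _.
  by rewrite mulr_ge0 ?mxpow_ge0 //; case: W_stoch.
by exists 1 => _ [t _ <-]; apply/row_stochastic_le1/row_stochastic_mxpow.
Qed.

Let transient_mass t k := \sum_(l | ~~ A l) mxpow W t k l.

(* The transient mass converges because the absorbed columns are nondecreasing;
   its limit is harmonic and vanishes on A, hence vanishes everywhere. *)
Lemma transient_mass_cvg0 k : transient_mass t k @[t --> \oo] --> 0.
Proof.
have massE t k' : transient_mass t k' = 1 - \sum_(l | A l) mxpow W t k' l.
  have [_ sum1] := row_stochastic_mxpow W t W_stoch.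
  by rewrite -(sum1 k') (bigID A) /= addrAC subrr add0r.
have mass_cvg k' : transient_mass t k' @[t --> \oo] --> limn (transient_mass ^~ k').
  apply/cvg_ex; exists (1 - \sum_(l | A l) limn (fun t => mxpow W t k' l)).
  under eq_fun do rewrite massE.
  apply: cvgB; first exact: cvg_cst.
  by apply: (cvg_big add_continuous) => l Al; apply: cvgn_mxpow_absorbing.
suff <- : limn (transient_mass ^~ k) = 0 by apply: mass_cvg.
pose mass_lim k' := limn (transient_mass ^~ k').
apply: (harmonic_eq0 W mass_lim A W_stoch _ W_reaches) => [|s As].
  apply: (harmonic_cvg W transient_mass) => [t k'|]; last exact: mass_cvg.
  rewrite /transient_mass; under eq_bigr do rewrite mxpowSl mxE.
  by rewrite exchange_big; apply: eq_bigr => j _; rewrite mulr_sumr.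
rewrite /mass_lim (_ : transient_mass ^~ s = fun=> 0) ?lim_cst //.
apply: funext => t; rewrite /transient_mass big1 // => l Al.
by rewrite mxpow_absorbing //; case: eqP Al => // <-; rewrite As.
Qed.

Lemma cvg_mxpow_transient k l : ~~ A l -> mxpow W t k l @[t --> \oo] --> 0.
Proof.
move=> Al; apply: (squeeze_cvgr _ (cvg_cst 0) (transient_mass_cvg0 k)).
apply: nearW => t; rewrite mxpow_ge0 /= /transient_mass (bigD1 l) //= lerDl.
by rewrite sumr_ge0.
Qed.

Lemma cvg_mxlim k l : mxpow W t k l @[t --> \oo] --> mxlim W k l.
Proof.
rewrite mxE; have [Al|Al] := boolP (A l); first exact: cvgn_mxpow_absorbing.
by apply: cvgP; apply: cvg_mxpow_transient.
Qed.

Lemma mxlim_transient k l : ~~ A l -> mxlim W k l = 0.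
Proof. by move=> Al; rewrite mxE; apply: cvg_lim => //; apply: cvg_mxpow_transient. Qed.

Lemma mxlim_absorbing s l : A s -> mxlim W s l = (s == l)%:R.
Proof.
move=> As; rewrite mxE; apply: cvg_lim => //.
by under eq_fun do rewrite mxpow_absorbing //; apply: cvg_cst.
Qed.

Lemma row_stochastic_mxlim : row_stochastic (mxlim W).
Proof.
split=> [k l|k].
  rewrite mxE; apply: limr_ge; first exact: (cvgP _ (cvg_mxlim k l)).
  by apply: nearW => t; apply: mxpow_ge0.
have sum_cvg : (fun t => \sum_l mxpow W t k l) @ \oo --> \sum_l mxlim W k l.
  by apply: (cvg_big add_continuous) => l _; apply: cvg_mxlim.
rewrite (_ : (fun t => _) = fun=> 1) in sum_cvg; last first.
  by apply: funext => t; have [_ ->] := row_stochastic_mxpow W t W_stoch.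
exact: cvg_unique sum_cvg (cvg_cst _).
Qed.

Lemma harmonic_mxlim l : harmonic W (fun k => mxlim W k l).
Proof.
apply: (harmonic_cvg W (fun t k => mxpow W t k l)) => [t k|k].
  by rewrite mxpowSl mxE.
exact: cvg_mxlim.
Qed.

End AbsorbingChain.

Lemma mxlim_eq {R : realType} {n : nat} (W1 W2 : 'M[R]_n) (A : pred 'I_n) :
  row_stochastic W1 -> absorbing W1 A -> reaches W1 A ->
  row_stochastic W2 -> absorbing W2 A -> reaches W2 A ->
  (forall g, harmonic W1 g -> harmonic W2 g) -> mxlim W1 = mxlim W2.
Proof.
move=> W1_stoch W1_abs W1_reach W2_stoch W2_abs W2_reach harmonic12.
apply/matrixP => k l; apply/eqP; rewrite -subr_eq0; apply/eqP; move: k.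
apply: (harmonic_eq0 W2 (fun k => mxlim W1 k l - mxlim W2 k l) A) => // [|s As].
  apply: harmonicB; last exact: harmonic_mxlim W2_stoch W2_abs W2_reach l.
  by apply: harmonic12; apply: harmonic_mxlim W1_stoch W1_abs W1_reach l.
by rewrite (mxlim_absorbing W1_abs) ?(mxlim_absorbing W2_abs) ?subrr.
Qed.

Section ConvexCombination.
Context {R : realFieldType} {n : nat} (h c : 'I_n -> R).
Hypotheses (h_ge0 : forall l, 0 <= h l) (h_sum1 : \sum_l h l = 1).

Let mul_le_support s l : (0 < h l -> c l <= s) -> h l * c l <= h l * s.
Proof.
have [hl_gt0 c_le|hl_le0 _] := ltP 0 (h l); first by rewrite ler_pM2l ?c_le.
suff -> : h l = 0 by rewrite !mul0r.
by apply/le_anti; rewrite hl_le0 h_ge0.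
Qed.

Lemma convex_sum_le s : (forall l, 0 < h l -> c l <= s) -> \sum_l h l * c l <= s.
Proof.
move=> c_le; rewrite -[s]mul1r -h_sum1 mulr_suml.
by apply: ler_sum => l _; apply: mul_le_support; apply: c_le.
Qed.

Lemma convex_sum_lt s : (forall l, 0 < h l -> c l < s) -> \sum_l h l * c l < s.
Proof.
move=> c_lt; have [l0 /andP[_ hl0_gt0]] : exists l0, true && (0 < h l0).
  by apply: psumr_neq0P => //; rewrite h_sum1; apply/eqP; rewrite oner_eq0.
rewrite -[s]mul1r -h_sum1 mulr_suml (bigD1 l0) //= [X in _ < X](bigD1 l0) //=.
rewrite ltr_leD ?ltr_pM2l ?c_lt //; apply: ler_sum => l _.
by apply: mul_le_support => /c_lt /ltW.
Qed.

End ConvexCombination.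

Definition stubborn {R : realType} {n : nat} (u : 'rV[R]_n) : pred 'I_n :=
  fun k => u 0 k == 1.

Section OpinionDynamics.
Context {R : realType} {n : nat} (P : 'M[R]_n) (u : 'rV[R]_n).

Lemma WmxE k l : Wmx P u k l = (1 - u 0 k) * P k l + u 0 k * (k == l)%:R.
Proof. by rewrite /Wmx mulmxBl mul1mx mul_diag_mx !mxE mulr_natr mulrBl mul1r. Qed.

Lemma sum_WmxE (g : 'I_n -> R) k :
  \sum_j Wmx P u k j * g j = (1 - u 0 k) * \sum_j P k j * g j + u 0 k * g k.
Proof.
under eq_bigr do rewrite WmxE mulrDl -!mulrA.
by rewrite big_split /= -!mulr_sumr sum_kronecker.
Qed.

Lemma absorbing_Wmx : absorbing (Wmx P u) (stubborn u).
Proof. by move=> s l /eqP us; rewrite WmxE us subrr mul0r add0r mul1r. Qed.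

Lemma harmonic_WmxP (g : 'I_n -> R) : harmonic (Wmx P u) g <->
  (forall k, ~~ stubborn u k -> g k = \sum_j P k j * g j).
Proof.
split=> g_harm k; last first.
  rewrite sum_WmxE; have [->|uk] := eqVneq (u 0 k) 1.
    by rewrite subrr mul0r add0r mul1r.
  by rewrite -g_harm ?uk // mulrBl mul1r subrK.
move=> uk; apply: (mulfI (_ : 1 - u 0 k != 0)); first by rewrite subr_eq0 eq_sym.
by apply: (addIr (u 0 k * g k)); rewrite -sum_WmxE -g_harm mulrBl mul1r subrK.
Qed.

Hypotheses (P_stoch : row_stochastic P) (u_bound : forall k, 0 <= u 0 k <= 1).

Lemma row_stochastic_Wmx : row_stochastic (Wmx P u).
Proof.
have [P_ge0 P_sum1] := P_stoch; split=> [k l|k].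
  have /andP[uk_ge0 uk_le1] := u_bound k.
  by rewrite WmxE addr_ge0 ?mulr_ge0 ?subr_ge0.
under eq_bigr do rewrite -[Wmx P u k _]mulr1.
rewrite (sum_WmxE (fun=> 1)) mulr1; under eq_bigr do rewrite mulr1.
by rewrite P_sum1 mulr1 subrK.
Qed.

Lemma reaches_Wmx : irreducible_mx P -> (exists j, u 0 j = 1) ->
  reaches (Wmx P u) (stubborn u).
Proof.
move=> P_irr [j uj] k; move: uj; have /connectP [p p_path ->] := P_irr k j.
elim: p k p_path => [|b p IH] k /=; first by move=> _ uk; exists k; last exact/eqP.
case/andP => kb pb ul; have [uk|uk] := boolP (stubborn u k); first by exists k.
have [s bs us] := IH b pb ul; exists s => //; apply: connect_trans bs.
apply: connect1; rewrite /edge WmxE ltr_pwDl ?mulr_gt0 //.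
  by rewrite subr_gt0 lt_neqAle uk; have /andP[_ ->] := u_bound k.
by have /andP[uk_ge0 _] := u_bound k; rewrite mulr_ge0.
Qed.

End OpinionDynamics.

Lemma HmxE {R : realType} {n : nat} (P : 'M[R]_n) u : Hmx P u = mxlim (Wmx P u).
Proof. by []. Qed.

Lemma Hmx_eq_stubborn {R : realType} {n : nat} {P : 'M[R]_n} {u v : 'rV[R]_n} :
  row_stochastic P -> irreducible_mx P ->
  (forall k, 0 <= u 0 k <= 1) -> (forall k, 0 <= v 0 k <= 1) ->
  (exists j, u 0 j = 1) -> stubborn u =1 stubborn v -> Hmx P u = Hmx P v.
Proof.
move=> P_stoch P_irr u_bound v_bound [j uj] uv; have uvE := funext uv.
have v_has1 : exists j, v 0 j = 1.
  by exists j; apply/eqP; rewrite -[_ == _]/(stubborn v j) -uv; apply/eqP.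
rewrite !HmxE; apply: (mxlim_eq _ _ (stubborn u)).
- exact: row_stochastic_Wmx.
- exact: absorbing_Wmx.
- by apply: reaches_Wmx => //; exists j.
- exact: row_stochastic_Wmx.
- by rewrite uvE; apply: absorbing_Wmx.
- by rewrite uvE; apply: reaches_Wmx.
move=> g /harmonic_WmxP g_harm; apply/harmonic_WmxP => k.
by rewrite -uv; apply: g_harm.
Qed.

Section Cost.
Context {R : realType} {n : nat} {P : 'M[R]_n} {u : 'rV[R]_n} (sigma2 : 'I_n -> R).
Hypotheses (P_stoch : row_stochastic P) (P_irr : irreducible_mx P).
Hypotheses (u_bound : forall k, 0 <= u 0 k <= 1) (u_has1 : exists j, u 0 j = 1).

Let W_stoch := row_stochastic_Wmx P u P_stoch u_bound.
Let W_reaches := reaches_Wmx P u u_bound P_irr u_has1.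

Lemma Hmx_support k l : 0 < Hmx P u k l -> u 0 l = 1.
Proof.
move=> Hkl_gt0; apply/eqP; apply: contraTT Hkl_gt0 => ul.
by rewrite HmxE (mxlim_transient W_stoch (absorbing_Wmx P u) W_reaches) ?ltxx.
Qed.

Lemma cost_stubborn i : u 0 i = 1 -> cost P sigma2 i u = sigma2 i.
Proof.
move=> ui; rewrite /cost -[RHS]sum_kronecker; apply: eq_bigr => l _.
rewrite HmxE (mxlim_absorbing (absorbing_Wmx P u)); last exact/eqP.
by case: eqP; rewrite ?expr1n ?expr0n.
Qed.

Hypothesis sigma2_ge0 : forall l, 0 <= sigma2 l.

Let Hmx_stoch : row_stochastic (Hmx P u) :=
  row_stochastic_mxlim W_stoch (absorbing_Wmx P u) W_reaches.

Let cost_convex i : cost P sigma2 i u = \sum_l Hmx P u i l * (Hmx P u i l * sigma2 l).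
Proof. by apply: eq_bigr => l _; rewrite expr2 mulrA. Qed.

Let Hmx_mul_le k l : Hmx P u k l * sigma2 l <= sigma2 l.
Proof. by rewrite ler_piMl // (row_stochastic_le1 _ _ _ Hmx_stoch). Qed.

Lemma cost_le i s : (forall l, u 0 l = 1 -> sigma2 l <= s) -> cost P sigma2 i u <= s.
Proof.
move=> sigma2_le; have [H_ge0 H_sum1] := Hmx_stoch.
rewrite cost_convex; apply: convex_sum_le (H_ge0 i) (H_sum1 i) _ _ => l Hl_gt0.
exact: le_trans (Hmx_mul_le i l) (sigma2_le l (Hmx_support _ _ Hl_gt0)).
Qed.

Lemma cost_lt i s : (forall l, u 0 l = 1 -> sigma2 l < s) -> cost P sigma2 i u < s.
Proof.
move=> sigma2_lt; have [H_ge0 H_sum1] := Hmx_stoch.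
rewrite cost_convex; apply: convex_sum_lt (H_ge0 i) (H_sum1 i) _ _ => l Hl_gt0.
exact: le_lt_trans (Hmx_mul_le i l) (sigma2_lt l (Hmx_support _ _ Hl_gt0)).
Qed.

End Cost.

Definition argmin01 {R : realDomainType} (f : R -> R) : set R :=
  [set x | 0 <= x <= 1 /\ forall y, 0 <= y <= 1 -> f x <= f y].

Lemma best_responseE {R : realType} {n : nat} (P : 'M[R]_n) sigma2 i z :
  best_response P sigma2 i z = argmin01 (fun x => cost P sigma2 i (upd z i x)).
Proof. by []. Qed.

Section StepMinimizer.
Context {R : realDomainType} {f : R -> R} {c s : R}.
Hypotheses (f_lt1 : forall x, 0 <= x < 1 -> f x = c) (f1 : f 1 = s).

Let f0 : f 0 = c.
Proof. by rewrite f_lt1 // lexx ltr01. Qed.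

Let f_01 y : 0 <= y <= 1 -> f y = c \/ y = 1.
Proof.
case/andP=> y_ge0; rewrite le_eqVlt => /orP[/eqP|y_lt1]; first by right.
by left; rewrite f_lt1 // y_ge0.
Qed.

Let zero01 : 0 <= (0 : R) <= 1. Proof. by rewrite lexx ler01. Qed.
Let one01 : 0 <= (1 : R) <= 1. Proof. by rewrite ler01 lexx. Qed.

Lemma argmin01_lt : c < s -> argmin01 f = `[0, 1[.
Proof.
move=> cs; apply/seteqP; split=> x; rewrite /= in_itv /=.
  case=> /andP[x_ge0 x_le1] x_min; rewrite x_ge0 lt_neqAle x_le1 andbT /=.
  by apply/eqP => x1; move: (x_min 0 zero01); rewrite x1 f1 f0 leNgt cs.
case/andP=> x_ge0 x_lt1; split=> [|y /f_01 [->|->]]; first by rewrite x_ge0 ltW.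
  by rewrite f_lt1 ?x_ge0.
by rewrite f_lt1 ?x_ge0 // f1 ltW.
Qed.

Lemma argmin01_eq : c = s -> argmin01 f = `[0, 1].
Proof.
move=> cs; have f_const y : 0 <= y <= 1 -> f y = c.
  by move=> /f_01 [//|->]; rewrite f1.
apply/seteqP; split=> x; rewrite /= in_itv /=; first by case.
by move=> x01; split=> // y y01; rewrite !f_const.
Qed.

Lemma argmin01_gt : s < c -> argmin01 f = [set 1].
Proof.
move=> sc; apply/seteqP; split=> x /=.
  case=> /f_01 [fx|//] x_min; move: (x_min 1 one01).
  by rewrite fx f1 leNgt sc.
move=> ->; split=> [|y /f_01 [->|->]]; first exact: one01.
  by rewrite f1 ltW.
by rewrite f1.
Qed.

End StepMinimizer.

Section UnilateralDeviation.
Context {R : realType} {n : nat} {P : 'M[R]_n} (sigma2 : 'I_n -> R).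
Context {i : 'I_n} {z : 'rV[R]_n}.

Lemma cost_upd1 : cost P sigma2 i (upd z i 1) = sigma2 i.
Proof. by apply: cost_stubborn; rewrite mxE eqxx. Qed.

Hypotheses (P_stoch : row_stochastic P) (P_irr : irreducible_mx P).
Hypotheses (z_bound : forall j, j != i -> 0 <= z 0 j <= 1).
Hypothesis z_has1 : exists j, j != i /\ z 0 j = 1.

Let upd_bound x : 0 <= x <= 1 -> forall k, 0 <= upd z i x 0 k <= 1.
Proof. by move=> x01 k; rewrite mxE; case: eqVneq => // /z_bound. Qed.

Let upd_has1 x : exists j, upd z i x 0 j = 1.
Proof. by have [j [ji zj]] := z_has1; exists j; rewrite mxE (negPf ji). Qed.

Let upd0_bound : forall k, 0 <= upd z i 0 0 k <= 1.
Proof. by apply: upd_bound; rewrite lexx ler01. Qed.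

Lemma cost_upd_lt1 x : 0 <= x < 1 ->
  cost P sigma2 i (upd z i x) = cost P sigma2 i (upd z i 0).
Proof.
case/andP=> x_ge0 x_lt1; rewrite /cost (Hmx_eq_stubborn P_stoch P_irr
  (upd_bound x _) upd0_bound (upd_has1 x)) ?x_ge0 ?ltW // => k.
by rewrite /stubborn !mxE; case: (k == i); rewrite // (lt_eqF x_lt1) eq_sym oner_eq0.
Qed.

Hypothesis sigma2_ge0 : forall l, 0 <= sigma2 l.

Let upd0_stubborn (Q : 'I_n -> Prop) :
  (forall j, j != i -> z 0 j = 1 -> Q j) -> forall j, upd z i 0 0 j = 1 -> Q j.
Proof.
move=> zQ j; rewrite mxE; case: eqVneq => [_ /esym/eqP|]; last exact: zQ.
by rewrite oner_eq0.
Qed.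

Lemma cost_upd0_le : (forall j, j != i -> z 0 j = 1 -> sigma2 j <= sigma2 i) ->
  cost P sigma2 i (upd z i 0) <= sigma2 i.
Proof.
move=> sigma2_le; apply: (cost_le _ P_stoch P_irr upd0_bound (upd_has1 0) sigma2_ge0).
exact: upd0_stubborn.
Qed.

Lemma cost_upd0_lt : (forall j, j != i -> z 0 j = 1 -> sigma2 j < sigma2 i) ->
  cost P sigma2 i (upd z i 0) < sigma2 i.
Proof.
move=> sigma2_lt; apply: (cost_lt _ P_stoch P_irr upd0_bound (upd_has1 0) sigma2_ge0).
exact: upd0_stubborn.
Qed.

End UnilateralDeviation.

Theorem proposition4 (R : realType) (n : nat) (P : 'M[R]_n) (sigma2 : 'I_n -> R)
  (i : 'I_n) (z : 'rV[R]_n) :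
  (2 <= n)%N ->
  row_stochastic P -> irreducible_mx P -> aperiodic_mx P ->
  (forall j, 0 < sigma2 j) ->
  (forall j, j != i -> 0 <= z 0 j <= 1) ->
  (exists j, j != i /\ z 0 j = 1) ->
  let S := [set j | j != i /\ z 0 j = 1] in
  let B := best_response P sigma2 i z in
  [/\ (forall x y, 0 <= x < 1 -> 0 <= y < 1 ->
         cost P sigma2 i (upd z i x) = cost P sigma2 i (upd z i y)),
      (B = (`[0, 1[) \/ B = (`[0, 1]) \/ B = [set (1 : R)]),
      ((forall j, S j -> sigma2 j <= sigma2 i) -> B = (`[0, 1[) \/ B = (`[0, 1])) &
      ((forall j, S j -> sigma2 j < sigma2 i) -> B = (`[0, 1[))].
Proof.
move=> _ P_stoch P_irr _ sigma2_gt0 z_bound z_has1 S B.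
have sigma2_ge0 l : 0 <= sigma2 l by apply: ltW.
pose v x := cost P sigma2 i (upd z i x).
have v_lt1 : forall x, 0 <= x < 1 -> v x = v 0 :=
  cost_upd_lt1 sigma2 P_stoch P_irr z_bound z_has1.
have v1 : v 1 = sigma2 i := cost_upd1 sigma2.
have B_lt := argmin01_lt v_lt1 v1; have B_eq := argmin01_eq v_lt1 v1.
have B_gt := argmin01_gt v_lt1 v1.
rewrite /B best_responseE -/v; split.
- by move=> x y x01 y01; rewrite -/(v x) -/(v y) !v_lt1.
- by case: (ltgtP (v 0) (sigma2 i)) => [/B_lt|/B_gt|/B_eq]; auto.
- move=> S_le; have := cost_upd0_le sigma2 P_stoch P_irr z_bound z_has1 sigma2_ge0.
  move=> /(_ (fun j ji zj => S_le j (conj ji zj))).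
  by rewrite le_eqVlt => /orP[/eqP/B_eq|/B_lt]; auto.
- move=> S_lt; apply/B_lt/(cost_upd0_lt sigma2 P_stoch P_irr z_bound z_has1 sigma2_ge0).
  by move=> j ji zj; apply: S_lt.
Qed.
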